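(* Let $K$ be a field, $S=K[x_1,\dots,x_n]$, $A\subseteq\{1,\dots,n\}$, $f=\prod_{j\in A}x_j$, let $J\subset I\subset S_f$ be monomial ideals, and let $t_1,\dots,t_r$ be new variables. Then $$\operatorname{sdepth}(I/J)[t_1^{\pm1},\dots,t_r^{\pm1}]=\operatorname{sdepth}(I/J)+r.$$
   Context: $S_f=K[x_1,\dots,x_n,x_j^{-1}:j\in A]$, with $K$-basis the monomials $x_1^{a_1}\cdots x_n^{a_n}$, $a_j\in\mathbb Z$ for $j\in A$, $a_j\in\mathbb N$ otherwise; monomial ideals are ideals generated by monomials, and $I/J$ has $K$-basis the monomials in $I\setminus J$. A Stanley space of $I/J$ is $uK[Z]$, the $K$-span of all $uw$ ($w$ a monomial in elements of $Z$), where $u\in I\setminus J$ is a monomial, $Z$ a subset of the variables and of the inverses of the inverted variables containing no pair $\{x_j,x_j^{-1}\}$, and $uK[Z]$ is a free $K[Z]$-submodule of $I/J$; its dimension is $|Z|$. Stanley decompositions are finite direct sums of Stanley spaces equal to $I/J$; $\operatorname{sdepth}$ of a decomposition is the minimal dimension of its spaces, and $\operatorname{sdepth}(I/J)$ the maximum over all decompositions. $(I/J)[t_1^{\pm1},\dots,t_r^{\pm1}]=IT/JT$ where $T=S_f[t_1^{\pm1},\dots,t_r^{\pm1}]$, the localization of $K[x_1,\dots,x_n,t_1,\dots,t_r]$ at $f t_1\cdots t_r$, with Stanley depth defined in the same way. *)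

From mathcomp Require Import all_boot all_order all_algebra.
Set Implicit Arguments. Unset Strict Implicit. Unset Printing Implicit Defensive.
Import Order.TTheory GRing.Theory Num.Theory.
Local Open Scope ring_scope.

(* Ambient ring: K[y_1..y_m, y_j^{-1} : j in inv].  A monomial is its
   exponent vector a : 'I_m -> int with a j >= 0 for j not in inv. *)
Definition mono (m : nat) (inv : {set 'I_m}) (a : 'I_m -> int) : Prop :=
  forall j, j \notin inv -> 0 <= a j.

(* A monomial ideal, represented by the set of monomials it contains:
   a set of monomials closed under multiplication by monomials. *)
Definition mideal (m : nat) (inv : {set 'I_m}) (I : ('I_m -> int) -> Prop) : Prop :=
  (forall a, I a -> mono inv a) /\
  (forall a b, I a -> mono inv b -> I (fun j => a j + b j)).

(* Z : subset of the variables (j,true) = y_j and of the inverses of inverted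
   variables (j,false) = y_j^{-1}, containing no pair {y_j, y_j^{-1}}. *)
Definition valid_Z (m : nat) (inv : {set 'I_m}) (Z : {set 'I_m * bool}) : Prop :=
  (forall j, (j, false) \in Z -> j \in inv) /\
  (forall j, ~ ((j, true) \in Z /\ (j, false) \in Z)).

(* a is a monomial of u K[Z], i.e. a = u * w with w a monomial in Z. *)
Definition in_space (m : nat) (u : 'I_m -> int) (Z : {set 'I_m * bool})
    (a : 'I_m -> int) : Prop :=
  forall j, (0 < a j - u j -> (j, true) \in Z) /\ (a j - u j < 0 -> (j, false) \in Z).

(* u K[Z] is a Stanley space of I/J: u K[Z] is a (necessarily free)
   K[Z]-submodule of I/J, i.e. all its monomials lie in I \ J. *)
Definition stanley_space (m : nat) (inv : {set 'I_m}) (I J : ('I_m -> int) -> Prop)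
    (u : 'I_m -> int) (Z : {set 'I_m * bool}) : Prop :=
  valid_Z inv Z /\ I u /\ ~ J u /\
  forall a, in_space u Z a -> I a /\ ~ J a.

(* A Stanley decomposition: finitely many Stanley spaces D i = (u_i, Z_i)
   whose (monomial) direct sum is I/J: every monomial of I \ J lies in
   exactly one of them. *)
Definition stanley_decomp (m : nat) (inv : {set 'I_m}) (I J : ('I_m -> int) -> Prop)
    (k : nat) (D : 'I_k -> ('I_m -> int) * {set 'I_m * bool}) : Prop :=
  (forall i, stanley_space inv I J (D i).1 (D i).2) /\
  (forall a, I a -> ~ J a ->
     exists i, in_space (D i).1 (D i).2 a /\
       forall i', in_space (D i').1 (D i').2 a -> i' = i).

Definition sdepth_ge (m : nat) (inv : {set 'I_m}) (I J : ('I_m -> int) -> Prop)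
    (d : nat) : Prop :=
  exists k (D : 'I_k -> ('I_m -> int) * {set 'I_m * bool}),
    stanley_decomp inv I J D /\ forall i, (d <= #|(D i).2|)%N.

Definition is_sdepth (m : nat) (inv : {set 'I_m}) (I J : ('I_m -> int) -> Prop)
    (d : nat) : Prop :=
  sdepth_ge inv I J d /\ forall e, sdepth_ge inv I J e -> (e <= d)%N.

(* Extension to T = S_f[t_1^{+-1},...,t_r^{+-1}]: variables 'I_(n + r),
   the last r (the t's) all inverted. *)
Definition ext_inv (n r : nat) (A : {set 'I_n}) : {set 'I_(n + r)} :=
  [set j | match split j with inl i => i \in A | inr _ => true end].

(* IT: monomials x^a t^b with x^a in I and b in Z^r arbitrary. *)
Definition ext_ideal (n : nat) (r : nat) (I : ('I_n -> int) -> Prop) :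
    ('I_(n + r) -> int) -> Prop :=
  fun a => I (fun i => a (lshift r i)).
Arguments ext_ideal {n} r I _.

From mathcomp Require Import all_boot all_order all_algebra.
From mathcomp Require Import zify.
From Stdlib Require Import FunctionalExtensionality.
Set Implicit Arguments. Unset Strict Implicit. Unset Printing Implicit Defensive.
Import Order.TTheory GRing.Theory Num.Theory.
Local Open Scope ring_scope.

(* A Stanley space u K[Z] of I/J splits, along the sign pattern S of the
   t-exponents, into the 2^r spaces u t^(-S) K[Z, t_j (j \notin S), t_j^-1 (j \in S)]
   of IT/JT, each of dimension |Z| + r; so sdepth(IT/JT) >= sdepth(I/J) + r.
   Conversely, intersecting a Stanley decomposition of IT/JT with the slice of
   monomials whose t-exponents vanish gives one of I/J: the spaces meeting the
   slice restrict to Stanley spaces of I/J and lose at most the r generators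
   involving t_1, ..., t_r. *)

Lemma split_lshift n r (i : 'I_n) : split (lshift r i) = inl i.
Proof. exact: (unsplitK (inl i)). Qed.

Lemma split_rshift n r (t : 'I_r) : split (rshift n t) = inr t.
Proof. exact: (unsplitK (inr t)). Qed.

Lemma in_space_refl m (u : 'I_m -> int) Z : in_space u Z u.
Proof. by move=> j; rewrite subrr ltxx. Qed.

Lemma stanley_spaceI m inv (I J : ('I_m -> int) -> Prop) u Z :
  valid_Z inv Z -> (forall a, in_space u Z a -> I a /\ ~ J a) ->
  stanley_space inv I J u Z.
Proof. by move=> VZ HZ; have [Iu Ju] := HZ u (in_space_refl u Z). Qed.

Lemma sdepth_ge_decomp m inv (I J : ('I_m -> int) -> Prop) d
    (T : finType) (P : {pred T}) (D : T -> ('I_m -> int) * {set 'I_m * bool}) :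
  (forall i, i \in P -> stanley_space inv I J (D i).1 (D i).2) ->
  (forall i, i \in P -> (d <= #|(D i).2|)%N) ->
  (forall a, I a -> ~ J a -> exists2 i, i \in P &
     in_space (D i).1 (D i).2 a /\
     forall i', i' \in P -> in_space (D i').1 (D i').2 a -> i' = i) ->
  sdepth_ge inv I J d.
Proof.
move=> HS Hd Hcov; exists #|P|, (fun j => D (enum_val j)).
split; last by move=> j; apply: Hd; exact: enum_valP.
split=> [j|a Ia Ja]; first by apply: HS; exact: enum_valP.
have [i Pi [ai uniq_i]] := Hcov a Ia Ja.
exists (enum_rank_in Pi i); rewrite enum_rankK_in //; split=> // j aj.
by apply: enum_val_inj; rewrite enum_rankK_in //; apply: uniq_i => //; exact: enum_valP.
Qed.

Section Extension.
Variables n r : nat.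

Definition xpart (a : 'I_(n + r) -> int) : 'I_n -> int := fun i => a (lshift r i).

Definition pad0 (v : 'I_n -> int) : 'I_(n + r) -> int :=
  fun j => if split j is inl i then v i else 0.

Lemma pad0_lshift v i : pad0 v (lshift r i) = v i.
Proof. by rewrite /pad0 split_lshift. Qed.

Lemma pad0_rshift v t : pad0 v (rshift n t) = 0.
Proof. by rewrite /pad0 split_rshift. Qed.

Lemma ext_ideal_pad0 (I : ('I_n -> int) -> Prop) v : ext_ideal r I (pad0 v) = I v.
Proof. by congr I; apply: functional_extensionality => i; rewrite pad0_lshift. Qed.

Definition restrZ (Z : {set 'I_(n + r) * bool}) : {set 'I_n * bool} :=
  [set p | (lshift r p.1, p.2) \in Z].

(* When [meets_slice u Z], the monomials of u K[Z] with vanishing t-exponents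
   are those of (xpart u) K[restrZ Z], padded with zeros. *)
Definition meets_slice (u : 'I_(n + r) -> int) (Z : {set 'I_(n + r) * bool}) : bool :=
  [forall t, ((0 < 0 - u (rshift n t)) ==> ((rshift n t, true) \in Z)) &&
             ((0 - u (rshift n t) < 0) ==> ((rshift n t, false) \in Z))].

Lemma in_space_pad0 u Z v :
  in_space u Z (pad0 v) <-> meets_slice u Z /\ in_space (xpart u) (restrZ Z) v.
Proof.
split=> [H | [/forallP slice_u H] j].
  split=> [|i]; last by have := H (lshift r i); rewrite pad0_lshift !inE.
  apply/forallP => t; have := H (rshift n t); rewrite pad0_rshift => -[h1 h2].
  by apply/andP; split; apply/implyP.
case: (split_ordP j) => [i ->|t ->].
  by rewrite pad0_lshift; have := H i; rewrite !inE.
by rewrite pad0_rshift; have /andP[/implyP h1 /implyP h2] := slice_u t.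
Qed.

Lemma card_restrZ inv Z : valid_Z inv Z -> (#|Z| <= #|restrZ Z| + r)%N.
Proof.
move=> [_ noPair].
pose xvar (p : 'I_n * bool) := (lshift r p.1, p.2).
pose tvar (t : 'I_r) := (rshift n t, (rshift n t, true) \in Z).
have sub : Z \subset xvar @: restrZ Z :|: tvar @: setT.
  apply/subsetP => -[j b] jZ; rewrite inE; case: (split_ordP j) => [i ei|t et].
    by apply/orP; left; apply/imsetP; exists (i, b); [rewrite inE /= -ei | rewrite ei].
  apply/orP; right; apply/imsetP; exists t => //; rewrite /tvar -et.
  case: b jZ => jZ; first by rewrite jZ.
  by case jZ': ((j, true) \in Z); first by case: (noPair j).
apply: (leq_trans (subset_leq_card sub)); apply: (leq_trans (leq_card_setU _ _).1).
apply: leq_add; first exact: leq_imset_card.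
by apply: (leq_trans (leq_imset_card _ _)); rewrite cardsT card_ord.
Qed.

Lemma sdepth_ge_slice (A : {set 'I_n}) (I J : ('I_n -> int) -> Prop) e :
  sdepth_ge (ext_inv r A) (ext_ideal r I) (ext_ideal r J) e ->
  sdepth_ge A I J (e - r).
Proof.
move=> [k [D [[HS Hcov] Hd]]].
apply: (@sdepth_ge_decomp _ _ _ _ _ _ [pred i | meets_slice (D i).1 (D i).2]
          (fun i => (xpart (D i).1, restrZ (D i).2))) => /=.
- move=> i slice_i; have [[notinv noPair] [_ [_ HZ]]] := HS i.
  apply: stanley_spaceI => [|v].
    split=> j; rewrite !inE; last exact: noPair.
    by move/notinv; rewrite inE split_lshift.
  by case/(conj slice_i)/in_space_pad0/HZ; rewrite !ext_ideal_pad0.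
- move=> i _; rewrite leq_subLR addnC; apply: leq_trans (Hd i) _.
  by have [VZ _] := HS i; exact: card_restrZ VZ.
- move=> v Iv Jv.
  have := Hcov (pad0 v); rewrite !ext_ideal_pad0.
  case/(_ Iv Jv) => i [/in_space_pad0[slice_i vi] uniq_i].
  exists i => //; split=> // i' slice_i' vi'.
  by apply: uniq_i; apply/in_space_pad0.
Qed.

(* The piece u t^(-S) K[Z, t_j (j \notin S), t_j^-1 (j \in S)] of u K[Z] in IT/JT;
   [(rshift n t, b)] with [b = (t \notin S)] is the t-variable it adds. *)
Definition ext_gen (u : 'I_n -> int) (S : {set 'I_r}) : 'I_(n + r) -> int :=
  fun j => match split j with inl i => u i | inr t => if t \in S then -1 else 0 end.

Definition ext_vars (Z : {set 'I_n * bool}) (S : {set 'I_r}) : {set 'I_(n + r) * bool} :=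
  [set p | match split p.1 with inl i => (i, p.2) \in Z | inr t => p.2 == (t \notin S) end].

Lemma ext_gen_lshift u S i : ext_gen u S (lshift r i) = u i.
Proof. by rewrite /ext_gen split_lshift. Qed.

Lemma ext_gen_rshift u S t : ext_gen u S (rshift n t) = if t \in S then -1 else 0.
Proof. by rewrite /ext_gen split_rshift. Qed.

Lemma ext_vars_lshift Z S i b : ((lshift r i, b) \in ext_vars Z S) = ((i, b) \in Z).
Proof. by rewrite inE /= split_lshift. Qed.

Lemma ext_vars_rshift Z S t b : ((rshift n t, b) \in ext_vars Z S) = (b == (t \notin S)).
Proof. by rewrite inE /= split_rshift. Qed.

Lemma valid_ext_vars (A : {set 'I_n}) Z S :
  valid_Z A Z -> valid_Z (ext_inv r A) (ext_vars Z S).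
Proof.
move=> [notinv noPair]; split=> j; case: (split_ordP j) => [i ->|t ->];
  rewrite ?ext_vars_lshift ?ext_vars_rshift ?inE ?split_lshift ?split_rshift //;
  first exact: notinv.
by case: (t \in S) => -[].
Qed.

Lemma card_ext_vars (Z : {set 'I_n * bool}) (S : {set 'I_r}) : (#|Z| + r <= #|ext_vars Z S|)%N.
Proof.
pose xvar (p : 'I_n * bool) := (lshift r p.1, p.2).
pose tvar (t : 'I_r) := (rshift n t, t \notin S).
have xvar_inj : injective xvar.
  by move=> [i b] [i' b'] [/val_inj -> ->].
have tvar_inj : injective tvar by move=> t t' [/addnI/val_inj].
have disj : [disjoint xvar @: Z & tvar @: setT].
  rewrite -setI_eq0; apply/eqP/setP => p; rewrite !inE.
  apply/negbTE/andP => -[/imsetP[q _ ->] /imsetP[t _ /(congr1 fst)/eqP]].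
  by rewrite eq_lrshift.
have sub : xvar @: Z :|: tvar @: setT \subset ext_vars Z S.
  apply/subsetP => p; rewrite inE => /orP[/imsetP[q qZ ->]|/imsetP[t _ ->]].
    by rewrite ext_vars_lshift -surjective_pairing.
  by rewrite ext_vars_rshift.
apply: leq_trans (subset_leq_card sub).
move: disj; rewrite -(leq_card_setU _ _).2 => /eqP ->.
by rewrite (card_imset _ xvar_inj) (card_imset _ tvar_inj) cardsT card_ord.
Qed.

Lemma in_space_ext u Z S a :
  in_space (ext_gen u S) (ext_vars Z S) a <->
  in_space u Z (xpart a) /\ forall t, (t \in S) = (a (rshift n t) < 0).
Proof.
split=> [H | [H signS] j].
  split=> [i|t]; first by have := H (lshift r i); rewrite ext_gen_lshift !ext_vars_lshift.
  have := H (rshift n t); rewrite ext_gen_rshift !ext_vars_rshift.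
  case: (t \in S) => /= -[h1 h2]; case: (ltP (a (rshift n t)) 0) => // ?.
  - by have := h1 ltac:(lia).
  - by have := h2 ltac:(lia).
case: (split_ordP j) => [i ->|t ->].
  by rewrite ext_gen_lshift !ext_vars_lshift; exact: H.
rewrite ext_gen_rshift !ext_vars_rshift signS.
by case: (ltP (a (rshift n t)) 0) => /= ?; split=> // ?; exfalso; lia.
Qed.

Lemma sdepth_ge_ext (A : {set 'I_n}) (I J : ('I_n -> int) -> Prop) d :
  sdepth_ge A I J d ->
  sdepth_ge (ext_inv r A) (ext_ideal r I) (ext_ideal r J) (d + r).
Proof.
move=> [k [D [[HS Hcov] Hd]]].
apply: (@sdepth_ge_decomp _ _ _ _ _ _ [pred _ | true]
   (fun p : 'I_k * {set 'I_r} => (ext_gen (D p.1).1 p.2, ext_vars (D p.1).2 p.2))) => /=.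
- move=> [i S] _ /=; have [VZ [_ [_ HZ]]] := HS i.
  apply: stanley_spaceI => [|a /in_space_ext[/HZ //]]; exact: valid_ext_vars.
- by move=> [i S] _ /=; apply: leq_trans (card_ext_vars _ _); rewrite leq_add2r.
- move=> a Ia Ja; have [i [ai uniq_i]] := Hcov _ Ia Ja.
  exists (i, [set t | a (rshift n t) < 0]) => //; split.
    by apply/in_space_ext; split=> // t; rewrite inE.
  move=> [i' S'] _ /= /in_space_ext[ai' signS']; rewrite (uniq_i i' ai').
  by congr pair; apply/setP => t; rewrite inE signS'.
Qed.

End Extension.

Local Close Scope ring_scope.

Theorem corollary4p2 (K : fieldType) (n r : nat) (A : {set 'I_n})
    (I J : ('I_n -> int) -> Prop) :
  mideal A I -> mideal A J -> (forall a, J a -> I a) ->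
  (forall d, is_sdepth A I J d ->
     is_sdepth (ext_inv r A) (ext_ideal r I) (ext_ideal r J) (d + r)) /\
  (forall e, is_sdepth (ext_inv r A) (ext_ideal r I) (ext_ideal r J) e ->
     exists d, e = (d + r)%N /\ is_sdepth A I J d).
Proof.
(* The transfer of decompositions works for arbitrary sets of monomials I, J. *)
move=> _ _ _; split=> [d [ge_d max_d] | e [ge_e max_e]].
  split=> [|e /sdepth_ge_slice/max_d]; [exact: sdepth_ge_ext | lia].
have ge_er := sdepth_ge_slice ge_e.
have r_le_e : (r <= e)%N by have := max_e _ (sdepth_ge_ext r ge_er); lia.
exists (e - r); split; first by rewrite subnK.
by split=> // d /(sdepth_ge_ext r)/max_e; lia.
Qed.
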